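(* Let $$Q_0(x) = x^{q^2+1} + x^{s(\sqrt{2q}+1)} + x^s + 1 \in \mathbb{F}_2[x].$$ Then the set of roots of $Q_0$ (in $E$, equivalently in an algebraic closure of $E$) is exactly $\mathcal{T}_0$.
   Context: Let $q = 2^m$ with $m \ge 3$ odd, so that $\sqrt{2q} = 2^{(m+1)/2}$ is an integer. Let $E = \mathbb{F}_{q^4}$, and put $s = q - \sqrt{2q} + 1$ and $t = q + \sqrt{2q} + 1$. Let $\mathcal{O}_s = \{x \in E \mid x^s = 1\}$ and $\mathcal{O}_t = \{x \in E \mid x^t = 1\}$. Define $$\mathcal{T}_0 = \mathcal{O}_s \cup \left\{\left(v^{q-1} + v^{-(q-1)}\right)^{q-1} uv \;\middle|\; u \in \mathcal{O}_s,\ v \in \mathcal{O}_t \setminus \{1\}\right\}.$$ *)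

From HB Require Import structures.
From mathcomp Require Import all_boot all_order all_algebra all_field.
Set Implicit Arguments. Unset Strict Implicit. Unset Printing Implicit Defensive.
Import GRing.Theory.
Local Open Scope ring_scope.

Definition qq (m : nat) : nat := (2 ^ m)%N.
(* sqrt(2q) = 2^((m+1)/2)  (an integer when m is odd) *)
Definition sq2q (m : nat) : nat := (2 ^ (m.+1)./2)%N.
Definition ss (m : nat) : nat := (qq m - sq2q m + 1)%N.
Definition tt (m : nat) : nat := (qq m + sq2q m + 1)%N.

(* Q_0(x) = x^(q^2+1) + x^(s(sqrt(2q)+1)) + x^s + 1, with coefficients 0/1,
   viewed over any ring R (for char-2 fields this is the image of the F_2 polynomial). *)
Definition Q0 (R : nzRingType) (m : nat) : {poly R} :=
  'X^((qq m) ^ 2 + 1) + 'X^(ss m * (sq2q m + 1)) + 'X^(ss m) + 1.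

(* membership in T_0 (inside a field F playing the role of E = F_{q^4}):
   O_s union { (v^(q-1) + v^(-(q-1)))^(q-1) u v | u in O_s, v in O_t \ {1} } *)
Definition inT0 (F : fieldType) (m : nat) (x : F) : Prop :=
  x ^+ ss m = 1 \/
  exists u v : F, [/\ u ^+ ss m = 1, v ^+ tt m = 1, v != 1 &
    x = (v ^+ (qq m - 1) + (v ^+ (qq m - 1))^-1) ^+ (qq m - 1) * u * v].

From mathcomp Require Import all_boot all_order all_algebra all_field cyclic.
From mathcomp.algebra_tactics Require Import ring.
Set Implicit Arguments. Unset Strict Implicit. Unset Printing Implicit Defensive.
Import GRing.Theory.
Local Open Scope ring_scope.

(* Put h = 2^k, so that q = 2h^2, r = 2h, s = q - r + 1, t = q + r + 1; then st = q^2 + 1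
   and q^4 - 1 = (q^2 - 1)st, so E contains the cyclic groups O_s and O_t. Take v in O_t,
   v <> 1, and set D = v^(q-1) + v^-(q-1), N = v^r + v^-r. Reducing exponents modulo t,
   the Frobenius x |-> x^q exchanges D and N, hence w = D^(q-1) = N/D satisfies
   w^(q+1) = 1. The exponents of Q0 then reduce modulo s, t and q + 1, and Q0(w u v) = 0
   for u in O_s becomes a rational identity in v^r and v^2 valid in characteristic 2;
   elements of O_s are roots directly. Every root x of this form satisfies
   x^(q^2) (uv)^2 = x, which determines uv, and O_s meets O_t only in 1, so the
   q^2 + 1 = st pairs (u, v) give distinct roots. As deg Q0 = q^2 + 1, Q0 splits over E
   with exactly these roots, in E and in every extension of E. *)

Section Char2.
Variable F : fieldType.
Hypothesis F2 : 2 \in [pchar F].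

Lemma exprD2n_pchar2 (x y : F) n : (x + y) ^+ (2 ^ n) = x ^+ (2 ^ n) + y ^+ (2 ^ n).
Proof. by apply: exprDn_pchar; rewrite pnatX (eq_pnat _ (pcharf_eq F2)) pnat_id. Qed.

Lemma expr2n_inj_pchar2 n : injective (fun x : F => x ^+ (2 ^ n)).
Proof.
move=> x y /= exy; apply/eqP; rewrite -subr_eq0 oppr_pchar2 //.
have : (x + y) ^+ (2 ^ n) == 0 by rewrite exprD2n_pchar2 exy addrr_pchar2.
by rewrite expf_eq0 expn_gt0.
Qed.

Lemma expr2n_eq1_pchar2 n (x : F) : x ^+ (2 ^ n) = 1 -> x = 1.
Proof. by move=> x1; apply: (@expr2n_inj_pchar2 n); rewrite /= x1 expr1n. Qed.

Lemma expr2n_addV_pchar2 (x : F) n :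
  (x + x^-1) ^+ (2 ^ n) = x ^+ (2 ^ n) + (x ^+ (2 ^ n))^-1.
Proof. by rewrite exprD2n_pchar2 exprVn. Qed.

Lemma sqrD_pchar2 (x y : F) : (x + y) ^+ 2 = x ^+ 2 + y ^+ 2.
Proof. exact: (exprD2n_pchar2 x y 1). Qed.

Lemma sqrD1_neq0_pchar2 (x : F) : x != 1 -> x ^+ 2 + 1 != 0.
Proof.
move=> x1; rewrite -[1](expr1n _ 2) -sqrD_pchar2 expf_neq0 //.
by rewrite -[1]oppr_pchar2 // subr_eq0.
Qed.

Lemma addV_eq0_pchar2 (x : F) : x != 0 -> (x + x^-1 == 0) = (x == 1).
Proof.
move=> x0; apply/idP/eqP => [|->]; last by rewrite invr1 addrr_pchar2.
rewrite addr_eq0 oppr_pchar2 // => /eqP xV; apply: (@expr2n_eq1_pchar2 1).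
by rewrite expr2 {1}xV mulVf.
Qed.

(* With a = v^r, c = v^2 and w = t0_scale m v this is w^r Q0(w u v) = 0, see
   [root_Q0_t0_scale]. *)
Lemma Q0_orbit_identity_pchar2 (a c w : F) : a != 0 -> c != 0 -> c != 1 -> a * c != 1 ->
  w = (a + a^-1) / (a * c + (a * c)^-1) ->
  (a ^+ 2 * c + (a ^+ 2 * c)^-1) / (c + c^-1) * (w ^+ 2 + 1)
    + w ^+ 2 * (a * c) ^+ 2 + a ^- 2 = 0.
Proof.
move=> a0 c0 c1 ac1 wE; set D := a * c + (a * c)^-1; set Nr := a ^+ 2 * c + _.
have acac1 : a * c * (a * c) != 1.
  by apply: contra ac1; rewrite -expr2 => /eqP /(@expr2n_eq1_pchar2 1) ->.
have D2E : D ^+ 2 = (a * c) ^+ 2 + (a * c) ^- 2 by rewrite sqrD_pchar2 exprVn.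
have wsq1 : w ^+ 2 + 1 = (c + c^-1) * Nr / D ^+ 2.
  rewrite wE expr_div_n -/D D2E sqrD_pchar2 exprVn /Nr; field.
  by rewrite c0 a0 sqrD1_neq0_pchar2.
have wsq2 : w ^+ 2 * (a * c) ^+ 2 + a ^- 2 = Nr ^+ 2 / D ^+ 2.
  rewrite -[Nr ^+ 2]addr0 -(addrr_pchar2 F2 (c ^+ 2)) wE expr_div_n -/D D2E.
  rewrite !sqrD_pchar2 !exprVn /Nr; field.
  by rewrite c0 a0 sqrD1_neq0_pchar2.
have Dr0 : c + c^-1 != 0 by rewrite addV_eq0_pchar2.
rewrite wsq1 -addrA wsq2 -!mulrA mulKf // mulrA -expr2.
exact: addrr_pchar2.
Qed.
End Char2.

Lemma PoszX (n e : nat) : (n ^ e)%N = (n : int) ^+ e :> int.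
Proof. by rewrite -!natz natrX. Qed.

Section SuzukiExponents.
Variable k : nat.
Local Notation m := k.*2.+1.
Let h : int := (2 ^ k)%N.

Lemma qq_int : qq m = 2 * h ^+ 2 :> int.
Proof. by rewrite /qq expnS -addnn expnD !PoszM expr2. Qed.

Lemma sq2q_int : sq2q m = 2 * h :> int.
Proof. by rewrite /sq2q -doubleS doubleK expnS PoszM. Qed.

Lemma qq_gt0 : (0 < qq m)%N.
Proof. by rewrite expn_gt0. Qed.

Lemma ss_gt0 : (0 < ss m)%N.
Proof. by rewrite /ss addn1. Qed.

Lemma tt_gt0 : (0 < tt m)%N.
Proof. by rewrite /tt addn1. Qed.

Lemma sq2q_le_qq : (sq2q m <= qq m)%N.
Proof. by rewrite /sq2q -doubleS doubleK leq_pexp2l // ltnS -addnn leq_addr. Qed.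

Lemma ss_int : ss m = 2 * h ^+ 2 - 2 * h + 1 :> int.
Proof. by rewrite /ss PoszD -subzn ?sq2q_le_qq // qq_int sq2q_int. Qed.

Lemma tt_int : tt m = 2 * h ^+ 2 + 2 * h + 1 :> int.
Proof. by rewrite /tt !PoszD qq_int sq2q_int. Qed.

Lemma ss_tt : (ss m * tt m = qq m ^ 2 + 1)%N.
Proof. by apply/eqP; rewrite -eqz_nat PoszM ss_int tt_int PoszD PoszX qq_int; apply/eqP; ring. Qed.

Lemma qq2_int : (qq m ^ 2)%N = 4 * h ^+ 4 :> int.
Proof. by rewrite PoszX qq_int; ring. Qed.

Lemma qq2S_int : (qq m ^ 2 + 1)%N = 4 * h ^+ 4 + 1 :> int.
Proof. by rewrite PoszD qq2_int. Qed.

Lemma qqS_int : (qq m).+1 = 2 * h ^+ 2 + 1 :> int.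
Proof. by rewrite -addn1 PoszD qq_int. Qed.

Lemma qq_sub1_int : (qq m - 1)%N = 2 * h ^+ 2 - 1 :> int.
Proof. by rewrite -subzn ?qq_gt0 // qq_int. Qed.

Lemma Q0_mid_int : (ss m * (sq2q m + 1))%N = (2 * h ^+ 2 - 2 * h + 1) * (2 * h + 1) :> int.
Proof. by rewrite PoszM PoszD ss_int sq2q_int. Qed.

Lemma tt_ss_gap : (tt m = ss m + 2 ^ k.+2)%N.
Proof. by apply/eqP; rewrite -eqz_nat PoszD tt_int ss_int !expnS !PoszM; apply/eqP; ring. Qed.

Lemma ss_tt_dvd : (ss m * tt m %| qq m ^ 4 - 1)%N.
Proof. by rewrite ss_tt -(exp1n 2) -[4%N]/(2 * 2)%N expnM subn_sqr dvdn_mull. Qed.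

Lemma Q0_exponents_lt : (ss m <= ss m * (sq2q m + 1) < qq m ^ 2 + 1)%N.
Proof.
rewrite -ss_tt leq_pmulr ?addn1 // ltn_pmul2l ?ss_gt0 //.
by rewrite /tt addn1 ltnS -{1}(add0n (sq2q m)) ltn_add2r qq_gt0.
Qed.

End SuzukiExponents.

(* Compound casts get dedicated lemmas: [PoszD] and [PoszM] would also match
   [Posz (ss m)] and [Posz (qq m)] after unfolding. *)
Ltac exponent_ring :=
  rewrite ?qq2S_int ?qq2_int ?qqS_int ?qq_sub1_int ?Q0_mid_int
          ?ss_int ?tt_int ?qq_int ?sq2q_int; ring.

Section ExponentReduction.
Variable F : fieldType.

Lemma expr_eq1_neq0 (x : F) n : (0 < n)%N -> x ^+ n = 1 -> x != 0.
Proof.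
by move=> n0 xn; apply: contra_eq_neq xn => ->; rewrite expr0n gtn_eqF // eq_sym oner_neq0.
Qed.

Lemma exprz_mod (x : F) (n : nat) (i j c : int) :
  x != 0 -> x ^+ n = 1 -> i = j + c * n -> x ^ i = x ^ j.
Proof.
by move=> x0 xn ->; rewrite expfzDr // (mulrC c) -exprz_exp -exprnP xn exp1rz mulr1.
Qed.

Lemma exprn_mod (x : F) (n N : nat) (j c : int) :
  x != 0 -> x ^+ n = 1 -> N = j + c * n :> int -> x ^+ N = x ^ j.
Proof. by rewrite exprnP; apply: exprz_mod. Qed.

End ExponentReduction.

Section OrbitPowers.
Variables (F : fieldType) (k : nat).
Local Notation m := k.*2.+1.
Local Notation r := (sq2q m : int).
Variables (w u v : F).
Hypotheses (w_order : w ^+ (qq m).+1 = 1) (u_order : u ^+ ss m = 1) (v_order : v ^+ tt m = 1).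

Let w0 : w != 0. Proof. exact: expr_eq1_neq0 w_order. Qed.
Let u0 : u != 0. Proof. exact: expr_eq1_neq0 (ss_gt0 k) u_order. Qed.
Let v0 : v != 0. Proof. exact: expr_eq1_neq0 (tt_gt0 k) v_order. Qed.

Tactic Notation "reduce" constr(x0) constr(x_order) uconstr(N) uconstr(e) uconstr(d) :=
  rewrite (@exprn_mod _ _ _ N e d x0 x_order); last by exponent_ring.

Lemma horner_Q0_orbit : (Q0 F m).[w * u * v] =
  w ^+ 2 + w ^ (2 - r) * v ^ (2 * r + 4) + w ^ (- r) * v ^ (- (2 * r)) + 1.
Proof.
rewrite /Q0 !hornerD !hornerXn hornerC !exprMn.
reduce w0 w_order (qq m ^ 2 + 1)%N 2%N ((qq m : int) - 1).
reduce u0 u_order (qq m ^ 2 + 1)%N 0 (tt m : int).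
reduce v0 v_order (qq m ^ 2 + 1)%N 0 (ss m : int).
reduce w0 w_order (ss m * (sq2q m + 1))%N (2 - r) (r - 1).
reduce u0 u_order (ss m * (sq2q m + 1))%N 0 (r + 1).
reduce v0 v_order (ss m * (sq2q m + 1))%N (2 * r + 4) (r - 3).
reduce w0 w_order (ss m) (- r) 1.
reduce u0 u_order (ss m) 0 1.
reduce v0 v_order (ss m) (- (2 * r)) 1.
by rewrite !expr0z !mulr1.
Qed.

Lemma expr_qq2_orbit : (w * u * v) ^+ (qq m ^ 2) * (u * v) ^+ 2 = w * u * v.
Proof.
rewrite !exprMn.
reduce w0 w_order (qq m ^ 2)%N 1 ((qq m : int) - 1).
reduce u0 u_order (qq m ^ 2)%N (-1) (tt m : int).
reduce v0 v_order (qq m ^ 2)%N (-1) (ss m : int).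
rewrite expr1z !exprN1; field.
by rewrite u0 v0.
Qed.

End OrbitPowers.

Definition t0_scale (F : fieldType) (m : nat) (v : F) : F :=
  (v ^+ (qq m - 1) + (v ^+ (qq m - 1))^-1) ^+ (qq m - 1).

Section NontrivialOrbit.
Variables (F : fieldType) (k : nat).
Hypothesis F2 : 2 \in [pchar F].
Local Notation m := k.*2.+1.
Local Notation r := (sq2q m : int).
Variable v : F.
Hypotheses (v_order : v ^+ tt m = 1) (v1 : v != 1).

Let v0 : v != 0. Proof. exact: expr_eq1_neq0 (tt_gt0 k) v_order. Qed.

Local Notation a := (v ^ r).
Local Notation c := (v ^ 2).

Let vpow_mod (N : nat) (i j : int) (d : int) : (N : int) * i = j + d * tt m ->
  (v ^ i) ^+ N = v ^ j.
Proof. by move=> e; rewrite exprnP exprz_exp mulrC e; apply: exprz_mod v0 v_order _. Qed.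

Let a0 : a != 0. Proof. exact: expfz_neq0. Qed.
Let c0 : c != 0. Proof. exact: expfz_neq0. Qed.
Let ac_E : a * c = v ^ (r + 2). Proof. by rewrite expfzDr. Qed.

Lemma orbit_a_qq : a ^+ qq m = a * c.
Proof. by rewrite ac_E; apply: (vpow_mod (d := r - 2)); exponent_ring. Qed.

Lemma orbit_ac_qq : (a * c) ^+ qq m = a^-1.
Proof. by rewrite ac_E invr_expz; apply: (vpow_mod (d := r)); exponent_ring. Qed.

Let a2c_E : a ^+ 2 * c = v ^ (2 * r + 2).
Proof. by rewrite exprnP exprz_exp -expfzDr // mulrC. Qed.

Lemma orbit_a_r : a ^+ sq2q m = (a ^+ 2 * c)^-1.
Proof. by rewrite a2c_E invr_expz; apply: (vpow_mod (d := 2)); exponent_ring. Qed.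

Lemma orbit_ac_r : (a * c) ^+ sq2q m = c^-1.
Proof. by rewrite ac_E invr_expz; apply: (vpow_mod (d := 2)); exponent_ring. Qed.

Let ac1 : a * c != 1.
Proof.
apply: contra v1 => /eqP ac1.
have : (a * c) ^+ (2 ^ k) = 1 by rewrite ac1 expr1n.
rewrite ac_E (vpow_mod (j := -1) (d := 1)); last by exponent_ring.
by rewrite -invr_expz expr1z => /eqP; rewrite invr_eq1.
Qed.

Let c1 : c != 1.
Proof. by apply: contra v1 => /eqP /(expr2n_eq1_pchar2 F2 (n := 1)) ->. Qed.

Local Notation D := (a * c + (a * c)^-1).
Local Notation N := (a + a^-1).

Lemma orbit_D_qq : D ^+ qq m = N.
Proof. by rewrite (expr2n_addV_pchar2 F2 _ m) orbit_ac_qq invrK addrC. Qed.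

Lemma orbit_N_qq : N ^+ qq m = D.
Proof. by rewrite (expr2n_addV_pchar2 F2 _ m) orbit_a_qq. Qed.

Let D0 : D != 0.
Proof. by rewrite addV_eq0_pchar2 ?mulf_neq0. Qed.

Let N0 : N != 0.
Proof. by rewrite -orbit_D_qq expf_neq0. Qed.

Lemma t0_scale_E : t0_scale m v = D ^+ (qq m - 1).
Proof.
rewrite /t0_scale (@exprn_mod _ _ _ _ (- (r + 2)) 1 v0 v_order); last by exponent_ring.
by rewrite -invr_expz ac_E invrK addrC.
Qed.

Local Notation w := (t0_scale m v).

Lemma t0_scale_div : w = N / D.
Proof. by rewrite t0_scale_E -orbit_D_qq -{2}(subnK (qq_gt0 k)) addn1 exprSr mulfK. Qed.

Lemma t0_scale_order : w ^+ (qq m).+1 = 1.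
Proof.
rewrite exprS t0_scale_div expr_div_n orbit_D_qq orbit_N_qq mulf_div.
by rewrite [D * N]mulrC divff ?mulf_neq0.
Qed.

Lemma t0_scale_r : w ^+ sq2q m = (a ^+ 2 * c + (a ^+ 2 * c)^-1) / (c + c^-1).
Proof.
rewrite t0_scale_div expr_div_n.
by rewrite !(expr2n_addV_pchar2 F2 _ (m.+1)./2) orbit_a_r orbit_ac_r !invrK addrC [c^-1 + _]addrC.
Qed.

Lemma root_Q0_t0_scale (u : F) : u ^+ ss m = 1 -> root (Q0 F m) (w * u * v).
Proof.
move=> u_order; have w0 : w != 0 := expr_eq1_neq0 (ltn0Sn _) t0_scale_order.
rewrite /root (horner_Q0_orbit t0_scale_order u_order v_order).
have -> : v ^ (2 * r + 4) = (a * c) ^+ 2.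
  by rewrite ac_E exprnP exprz_exp mulrC mulrDl.
have -> : v ^ (- (2 * r)) = a ^- 2.
  by rewrite exprnP exprz_exp invr_expz mulrC.
have -> : w ^ (2 - r) = w ^+ 2 / w ^+ sq2q m.
  by rewrite expfzDr // !exprnP invr_expz natz.
have -> : w ^ (- r) = (w ^+ sq2q m)^-1 by rewrite exprnP invr_expz.
have y0 : w ^+ sq2q m != 0 by rewrite expf_neq0.
rewrite (_ : _ + 1 = (w ^+ sq2q m)^-1 *
  (w ^+ sq2q m * (w ^+ 2 + 1) + w ^+ 2 * (a * c) ^+ 2 + a ^- 2)).
  by rewrite t0_scale_r (Q0_orbit_identity_pchar2 F2 a0 c0 c1 ac1 t0_scale_div) mulr0.
by field; rewrite a0 y0.
Qed.

End NontrivialOrbit.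

Lemma map_Q0 (R S : nzRingType) (f : {rmorphism R -> S}) m :
  map_poly f (Q0 R m) = Q0 S m.
Proof. by rewrite /Q0 !rmorphD /= !map_polyXn rmorph1. Qed.

Section Q0Degree.
Variables (R : nzRingType) (k : nat).
Local Notation m := k.*2.+1.

Let Q0_lower_size :
  (size ('X^(ss m * (sq2q m + 1)) + 'X^(ss m) + 1 : {poly R})%R < (qq m ^ 2 + 1).+1)%N.
Proof.
have /andP[lt_s lt_mid] := Q0_exponents_lt k.
rewrite (leq_ltn_trans (size_polyD _ _)) // gtn_max size_poly1.
apply/andP; split; last by rewrite ltnS addn1.
rewrite (leq_ltn_trans (size_polyD _ _)) // gtn_max !size_polyXn !ltnS lt_mid.
exact: leq_ltn_trans lt_s lt_mid.
Qed.

Lemma size_Q0 : size (Q0 R m) = (qq m ^ 2 + 1).+1.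
Proof. by rewrite /Q0 -!addrA size_polyDl ?size_polyXn // !addrA. Qed.

Lemma monic_Q0 : Q0 R m \is monic.
Proof. by rewrite /Q0 -!addrA monicE lead_coefDl ?lead_coefXn ?size_polyXn // !addrA. Qed.

End Q0Degree.

(* For v = 1 the formula in the definition of T_0 gives 0, which is why O_s is added
   separately there. *)
Definition t0_elt (F : fieldType) (m : nat) (u v : F) : F :=
  if v == 1 then u else t0_scale m v * u * v.

Lemma inT0_t0_eltP (F : fieldType) m (x : F) :
  inT0 m x <-> exists u v, [/\ u ^+ ss m = 1, v ^+ tt m = 1 & x = t0_elt m u v].
Proof.
split=> [[xs | [u [v [us vt v1 ->]]]] | [u [v [us vt ->]]]].
- by exists x, 1; rewrite /t0_elt eqxx expr1n.
- by exists u, v; rewrite /t0_elt (negPf v1).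
by rewrite /t0_elt; case: eqP => [_ | /eqP v1]; [left | right; exists u, v].
Qed.

Section T0Elements.
Variables (F : fieldType) (k : nat).
Hypothesis F2 : 2 \in [pchar F].
Local Notation m := k.*2.+1.

Lemma expr_ss_tt_eq1 (z : F) : z ^+ ss m = 1 -> z ^+ tt m = 1 -> z = 1.
Proof. by move=> zs; rewrite tt_ss_gap exprD zs mul1r => /(expr2n_eq1_pchar2 F2). Qed.

Variables u v : F.
Hypotheses (u_order : u ^+ ss m = 1) (v_order : v ^+ tt m = 1).

Lemma root_Q0_t0_elt : root (Q0 F m) (t0_elt m u v).
Proof.
rewrite /t0_elt; case: eqP => [_ | /eqP v1]; last exact: root_Q0_t0_scale.
rewrite /root -[u]mul1r -[1 * u]mulr1 horner_Q0_orbit ?expr1n //.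
by rewrite !exp1rz !mulr1 addrr_pchar2 // add0r addrr_pchar2.
Qed.

Lemma t0_elt_frobenius : t0_elt m u v ^+ (qq m ^ 2) * (u * v) ^+ 2 = t0_elt m u v.
Proof.
rewrite /t0_elt; case: eqP => [-> | /eqP v1].
  have := expr_qq2_orbit (expr1n F (qq m).+1) u_order (expr1n F (tt m)).
  by rewrite mul1r !mulr1.
exact: expr_qq2_orbit (t0_scale_order F2 v_order v1) u_order v_order.
Qed.

Let u0 : u != 0. Proof. exact: expr_eq1_neq0 (ss_gt0 k) u_order. Qed.
Let v0 : v != 0. Proof. exact: expr_eq1_neq0 (tt_gt0 k) v_order. Qed.

Lemma t0_elt_neq0 : t0_elt m u v != 0.
Proof.
rewrite /t0_elt; have [// | v1] := eqVneq v 1.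
by rewrite !mulf_neq0 // (expr_eq1_neq0 _ (t0_scale_order F2 v_order v1)).
Qed.

End T0Elements.

Section T0Injective.
Variables (F : fieldType) (k : nat).
Hypothesis F2 : 2 \in [pchar F].
Local Notation m := k.*2.+1.

Lemma t0_elt_inj (u v u' v' : F) :
  u ^+ ss m = 1 -> v ^+ tt m = 1 -> u' ^+ ss m = 1 -> v' ^+ tt m = 1 ->
  t0_elt m u v = t0_elt m u' v' -> u = u' /\ v = v'.
Proof.
move=> us vt us' vt' e.
have uv2 : (u * v) ^+ 2 = (u' * v') ^+ 2.
  apply: (mulfI (expf_neq0 (qq m ^ 2) (t0_elt_neq0 F2 us vt))).
  by rewrite (t0_elt_frobenius F2 us vt) e (t0_elt_frobenius F2 us' vt').
have uv : u * v = u' * v' := expr2n_inj_pchar2 F2 (n := 1) uv2.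
have u'0 : u' != 0 := expr_eq1_neq0 (ss_gt0 k) us'.
have v0 : v != 0 := expr_eq1_neq0 (tt_gt0 k) vt.
have uv' : u / u' = v' / v.
  by apply/eqP; rewrite eqr_div // uv mulrC.
have z1 : u / u' = 1.
  apply: (expr_ss_tt_eq1 (k := k) F2); first by rewrite expr_div_n us us' divr1.
  by rewrite uv' expr_div_n vt vt' divr1.
have uu' : u = u' by rewrite -(divfK u'0 u) z1 mul1r.
by split=> //; apply: (mulfI (expr_eq1_neq0 (ss_gt0 k) us)); rewrite uv uu'.
Qed.

Lemma uniq_t0_elts (Os Ot : seq F) : uniq Os -> uniq Ot ->
  all (fun u => u ^+ ss m == 1) Os -> all (fun v => v ^+ tt m == 1) Ot ->
  uniq [seq t0_elt m u v | u <- Os, v <- Ot].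
Proof.
move=> uOs uOt /allP Os1 /allP Ot1; apply: allpairs_uniq => // -[u v] -[u' v'].
move=> /allpairsP[[a b] [/= aOs bOt [-> ->]]] /allpairsP[[a' b'] [/= a'Os b'Ot [-> ->]]] /= e.
by have [-> ->] := t0_elt_inj (eqP (Os1 _ aOs)) (eqP (Ot1 _ bOt)) (eqP (Os1 _ a'Os))
                              (eqP (Ot1 _ b'Ot)) e.
Qed.

End T0Injective.

Lemma finField_prim_root (F : finFieldType) d :
  (d %| #|F|.-1)%N -> exists z : F, d.-primitive_root z.
Proof.
move=> dvd_d; set n := #|F|.-1.
have card_n : size (enum (predC1 (0 : F))) = n by rewrite -cardE cardC1.
have n_gt0 : (0 < n)%N.
  by rewrite -card_n -has_predT; apply/hasP; exists 1; rewrite // mem_enum inE oner_neq0.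
have /hasP[g _ gP] : has n.-primitive_root (enum (predC1 (0 : F))).
  apply: has_prim_root; rewrite ?enum_uniq ?card_n //.
  apply/allP => x; rewrite mem_enum /= unity_rootE => x0.
  apply/eqP/(mulIf x0); rewrite mul1r -exprSr prednK ?expf_card //.
  exact: leq_trans n_gt0 (leq_pred _).
by exists (g ^+ (n %/ d)); apply: dvdn_prim_root.
Qed.

Lemma uniq_prim_root_powers (R : nzRingType) d (z : R) :
  d.-primitive_root z -> uniq [seq z ^+ i | i <- iota 0 d].
Proof.
move=> zP; rewrite map_inj_in_uniq ?iota_uniq // => i j.
rewrite !mem_iota !add0n => /andP[_ ltid] /andP[_ ltjd] /eqP.
by rewrite (eq_prim_root_expr zP) !modn_small // => /eqP.
Qed.

Lemma prim_root_powers_order (R : nzRingType) d (z : R) :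
  d.-primitive_root z -> all (fun x => x ^+ d == 1) [seq z ^+ i | i <- iota 0 d].
Proof.
move=> zP; apply/allP => _ /mapP[i _ ->].
by rewrite exprAC (prim_expr_order zP) expr1n.
Qed.

Lemma monic_roots_prod_XsubC (F : fieldType) (p : {poly F}) rs :
  p \is monic -> size p = (size rs).+1 -> all (root p) rs -> uniq rs ->
  p = \prod_(z <- rs) ('X - z%:P).
Proof.
move=> /monicP p1 size_p rs_roots rs_uniq.
by rewrite [LHS](all_roots_prod_XsubC size_p) ?uniq_rootsE // p1 scale1r.
Qed.

Lemma root_map_prod_XsubC (F : fieldType) (L : fieldExtType F) rs (y : L) :
  root (map_poly (in_alg L) (\prod_(z <- rs) ('X - z%:P))) y ->
  exists2 x, x \in rs & y = x%:A.
Proof.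
rewrite map_prod_XsubC -(big_map (in_alg L) xpredT (fun a => 'X - a%:P)).
by rewrite root_prod_XsubC => /mapP[x xrs ->]; exists x.
Qed.

Definition t0_roots (F : fieldType) (m : nat) (zs zt : F) : seq F :=
  [seq t0_elt m u v | u <- [seq zs ^+ i | i <- iota 0 (ss m)],
                      v <- [seq zt ^+ j | j <- iota 0 (tt m)]].

Section Splitting.
Variables (F : fieldType) (k : nat).
Hypothesis F2 : 2 \in [pchar F].
Local Notation m := k.*2.+1.
Variables zs zt : F.
Hypotheses (zsP : (ss m).-primitive_root zs) (ztP : (tt m).-primitive_root zt).

Lemma t0_rootsP x : x \in t0_roots m zs zt -> inT0 m x.
Proof.
case/allpairsP => -[u v] [/= uOs vOt ->]; apply/inT0_t0_eltP; exists u, v.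
have /allP Os1 := prim_root_powers_order zsP; have /allP Ot1 := prim_root_powers_order ztP.
by split=> //; apply/eqP; [apply: Os1 | apply: Ot1].
Qed.

Lemma Q0_t0_roots : Q0 F m = \prod_(z <- t0_roots m zs zt) ('X - z%:P).
Proof.
apply: monic_roots_prod_XsubC; first exact: monic_Q0.
- by rewrite size_Q0 size_allpairs !size_map !size_iota ss_tt.
- by apply/allP => x /t0_rootsP /inT0_t0_eltP[u [v [us vt ->]]]; apply: root_Q0_t0_elt.
apply: uniq_t0_elts; rewrite ?uniq_prim_root_powers //; exact: prim_root_powers_order.
Qed.

End Splitting.

Theorem theorem4p4 (m : nat) (Hm : (3 <= m)%N) (Hodd : odd m)
  (F : finFieldType) (HF : #|F| = (qq m ^ 4)%N) :
  (forall x : F, root (Q0 F m) x <-> inT0 m x) /\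
  (forall (L : fieldExtType F) (y : L),
     root (Q0 L m) y -> exists x : F, inT0 m x /\ y = x%:A).
Proof.
have F2 : 2 \in [pchar F] by apply: (card_finPcharP (n := m * 4)); rewrite // HF /qq expnM.
have [k km] : exists k, m = k.*2.+1 by exists m./2; rewrite -[LHS]odd_double_half Hodd.
subst m; have card_dvd : (ss k.*2.+1 * tt k.*2.+1 %| #|F|.-1)%N.
  by rewrite HF -subn1 ss_tt_dvd.
have [zs zsP] := finField_prim_root (dvdn_trans (dvdn_mulr _ (dvdnn _)) card_dvd).
have [zt ztP] := finField_prim_root (dvdn_trans (dvdn_mull _ (dvdnn _)) card_dvd).
have Q0E := Q0_t0_roots F2 zsP ztP.
split=> [x | L y].
  split; first by rewrite Q0E root_prod_XsubC => /(t0_rootsP zsP ztP).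
  by case/inT0_t0_eltP => u [v [us vt ->]]; apply: root_Q0_t0_elt.
rewrite -(map_Q0 (in_alg L)) Q0E => /root_map_prod_XsubC[x /(t0_rootsP zsP ztP) xT0 ->].
by exists x.
Qed.
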